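(* Let $Q\in R$ and let $a,b,c,d$ be non-negative integers with $a+b\le n$ and $1\le c\le d\le b$. Then there exist elements $h_k\in H_{k-1,k}$ ($a+c\le k\le a+d$) such that $$T_{w_{a,b}}L_{c,d}(Q)=\Big\{L_{a+c,a+d}(Q)+\sum_{k=a+c}^{a+d}L_kh_k\Big\}T_{w_{a,b}}.$$
   Context: Ariki–Koike algebra: $R$ a commutative integral domain with $1$, $n,r\ge1$, $q,Q_1,\dots,Q_r\in R$, $q$ invertible; generators $T_0,\dots,T_{n-1}$, relations $(T_0-Q_1)\cdots(T_0-Q_r)=0$, $T_0T_1T_0T_1=T_1T_0T_1T_0$, $(T_i+q)(T_i-1)=0$ ($1\le i\le n-1$), $T_{i+1}T_iT_{i+1}=T_iT_{i+1}T_i$, $T_iT_j=T_jT_i$ ($0\le i<j-1\le n-2$). $T_w=T_{i_1}\cdots T_{i_k}$ for a reduced expression $w=s_{i_1}\cdots s_{i_k}$, $s_i=(i,i+1)$. $L_m=q^{1-m}T_{m-1}\cdots T_1T_0T_1\cdots T_{m-1}$. Notation: for $i\le j$, $T_{i,j}=T_iT_{i+1}\cdots T_j$, and $T_{i,j}=1$ if $i>j$. $T_{w_{a,b}}=T_{a,a+b-1}T_{a-1,a+b-2}\cdots T_{1,b}$ (and $T_{w_{a,b}}=1$ if $a=0$ or $b=0$); this is $T_w$ for the permutation $w_{a,b}$ sending $i\mapsto b+i$ for $1\le i\le a$ and $a+i\mapsto i$ for $1\le i\le b$, the product of the $s_{i,j}=s_is_{i+1}\cdots s_j$ being reduced. For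 $Q\in R$, $L_{i,j}(Q)=(L_i-Q)(L_{i+1}-Q)\cdots(L_j-Q)$ if $i\le j$ and $1$ if $i>j$. For $0\le k\le m\le n$, $H_{k,m}$ is the $R$-span of $\{L_1^{c_1}\cdots L_k^{c_k}T_w:0\le c_i<r,\ w\in\mathfrak S_m\}$, where $\mathfrak S_m\subseteq\mathfrak S_n$ is generated by $s_1,\dots,s_{m-1}$. *)

From HB Require Import structures.
From mathcomp Require Import all_boot all_order all_algebra.
Set Implicit Arguments. Unset Strict Implicit. Unset Printing Implicit Defensive.
Import Order.TTheory GRing.Theory Num.Theory.
Local Open Scope ring_scope.

Section AK.
Variables (R : comUnitRingType) (A : algType R).
Implicit Types (T : nat -> A) (q : R).

Definition AK_relations (n r : nat) q (Qs : 'I_r -> R) T : Prop :=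
  [/\ \prod_(i < r) (T 0%N - (Qs i)%:A) = 0,
      (1 < n)%N -> T 0%N * T 1%N * T 0%N * T 1%N = T 1%N * T 0%N * T 1%N * T 0%N,
      (forall i, (1 <= i < n)%N -> (T i + q%:A) * (T i - 1) = 0),
      (forall i, (1 <= i)%N -> (i.+1 < n)%N ->
          T i.+1 * T i * T i.+1 = T i * T i.+1 * T i) &
      (forall i j, (i.+1 < j)%N -> (j < n)%N -> T i * T j = T j * T i)].

Definition Tij T (i j : nat) : A := \prod_(i <= k < j.+1) T k.

Definition Twab T (a b : nat) : A :=
  \prod_(0 <= t < a) Tij T (a - t) (a + b - 1 - t).

Definition Lm T q (m : nat) : A :=
  (q ^+ m.-1)^-1 *:
    ((\prod_(k <- rev (iota 1 m.-1)) T k) * T 0%N * \prod_(1 <= k < m) T k).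

Definition Lij T q (Q : R) (i j : nat) : A :=
  \prod_(i <= k < j.+1) (Lm T q k - Q%:A).

Definition swapn (i x : nat) : nat :=
  if x == i then i.+1 else if x == i.+1 then i else x.

Definition word_perm (s : seq nat) (x : nat) : nat := foldr swapn x s.

Definition inversions (w : nat -> nat) (m : nat) : nat :=
  \sum_(1 <= i < m.+1) \sum_(i.+1 <= j < m.+1) (w j < w i)%N.

Definition reduced_in (m : nat) (s : seq nat) : bool :=
  all (fun i => (0 < i < m)%N) s && (size s == inversions (word_perm s) m).

Definition Tword T (s : seq nat) : A := \prod_(i <- s) T i.

Definition Lmon T q (k r : nat) (c : {ffun 'I_k -> 'I_r}) : A :=
  \prod_(i < k) Lm T q i.+1 ^+ c i.

(* membership in H_{k,m}: the R-span of L_1^{c_1}...L_k^{c_k} T_w,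
   0 <= c_i < r, w in S_m, T_w given by a reduced expression of w *)
Definition inH T q (r k m : nat) (h : A) : Prop :=
  exists s : seq ({ffun 'I_k -> 'I_r} * seq nat * R),
    all (fun x => reduced_in m x.1.2) s /\
    h = \sum_(x <- s) x.2 *: (Lmon T q x.1.1 * Tword T x.1.2).

End AK.

(* The key relation is T_{w_{a,b}} L_j = L_{a+j} (1 + g) T_{w_{a,b}} with g a combination
   of the T_w, w in S_{a+j} (Twab_L).  It follows by induction on a, since
   T_{w_{a+1,b}} = T_{a+1} ... T_{a+b} T_{w_{a,b}}, from T_i L_i = L_{i+1} (T_i + q - 1) and
   the commutation of L_j with T_i for i <> j-1, j.  Multiplying these relations for
   j = c, ..., d produces L_{a+c,a+d}(Q) plus error terms L_k h_k, where h_k combines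
   products L_1^{e_1} ... L_{k-1}^{e_{k-1}} T_w with e_i <= 1 and w in S_k.  These lie in
   H_{k-1,k} when r >= 2; when r = 1 the generator T_0 is a scalar and the L_i are
   themselves combinations of T_w.  The T_w are taken on Coxeter's normal words, which
   are reduced and whose span is closed under right multiplication by the T_i. *)

From HB Require Import structures.
From mathcomp Require Import all_boot all_order all_algebra.
From mathcomp Require Import zify.
Import GRing.Theory.
Local Open Scope ring_scope.
Set Implicit Arguments. Unset Strict Implicit. Unset Printing Implicit Defensive.

Section NormalWords.
Local Open Scope nat_scope.

Definition inversions_at (w : nat -> nat) m := \sum_(1 <= x < m) (w m < w x).

Lemma inversionsS w m : inversions w m.+1 = inversions w m + inversions_at w m.+1.
Proof.
rewrite /inversions /inversions_at big_nat_recr //= [X in _ + X = _]big_geq // addn0.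
rewrite -big_split /=; apply: eq_big_nat => x /andP[_ hx].
by rewrite big_nat_recr.
Qed.

Lemma eq_inversions w w' m : {in [pred x | 0 < x <= m], w =1 w'} ->
  inversions w m = inversions w' m.
Proof.
move=> eqw; apply: eq_big_nat => x hx; apply: eq_big_nat => y hy.
by rewrite !eqw // inE; lia.
Qed.

Lemma sum_swapn (f : nat -> nat) i M : 1 <= i -> i.+1 < M ->
  \sum_(1 <= x < M) f (swapn i x) = \sum_(1 <= x < M) f x.
Proof.
move=> hi hiM.
have split3 g : \sum_(1 <= x < M) g x =
    \sum_(1 <= x < i) g x + (g i + g i.+1) + \sum_(i.+2 <= x < M) g x.
  rewrite (@big_cat_nat _ _ _ i) //; last lia.
  rewrite (@big_cat_nat _ _ _ i.+2 i) //; last lia.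
  by rewrite /= [\sum_(i <= x < i.+2) _]big_nat_recl // big_nat1 addnA.
rewrite split3 [RHS]split3 /swapn eqxx (gtn_eqF (ltnSn i)) eqxx (addnC (f i.+1)).
congr (_ + _ + _); apply: eq_big_nat => x hx; rewrite !ifF //; lia.
Qed.

Lemma inversions_swapn w i m : 1 <= i < m -> w i < w i.+1 ->
  inversions (w \o swapn i) m = (inversions w m).+1.
Proof.
case: i => [//|p] /= hm hw.
have [k ->] : exists k, m = p.+2 + k by exists (m - p.+2); rewrite subnKC.
elim: k => [|k IH].
  rewrite addn0 !inversionsS.
  rewrite (@eq_inversions (w \o swapn p.+1) w p); last first.
    by move=> x; rewrite inE => hx /=; rewrite /swapn !ifF //; lia.
  have S2 g : \sum_(1 <= x < p.+2) g x = \sum_(1 <= x < p.+1) g x + g p.+1.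
    by rewrite big_nat_recr.
  rewrite /inversions_at /= (S2 (fun x => w (swapn p.+1 p.+2) < w (swapn p.+1 x))).
  rewrite (S2 (fun x => w p.+2 < w x)).
  have E y : \sum_(1 <= x < p.+1) (y < w (swapn p.+1 x)) =
             \sum_(1 <= x < p.+1) (y < w x).
    by apply: eq_big_nat => x hx; rewrite /swapn !ifF //; lia.
  rewrite !E /swapn eqxx ifF ?eqxx ?hw; last lia.
  have -> : (w p.+2 < w p.+1) = false by lia.
  by rewrite /=; lia.
rewrite addnS (inversionsS _ (p.+2 + k)) (inversionsS w (p.+2 + k)) IH addSn.
congr (_.+1 + _); rewrite /inversions_at /=.
have -> : swapn p.+1 (p.+2 + k).+1 = (p.+2 + k).+1 by rewrite /swapn !ifF //; lia.
by apply: (@sum_swapn (fun x => w (p.+2 + k).+1 < w x)); lia.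
Qed.

Lemma iotaSr j l : iota j l.+1 = iota j l ++ [:: j + l].
Proof. by rewrite -addn1 iotaD. Qed.

Lemma word_perm_cat s t x : word_perm (s ++ t) x = word_perm s (word_perm t x).
Proof. by rewrite /word_perm foldr_cat. Qed.

Lemma word_perm_out m s x : all (fun i => 0 < i < m) s -> m < x -> word_perm s x = x.
Proof.
elim: s => [|i s IH] //= /andP[hi hs] hx.
by rewrite IH // /swapn !ifF //; lia.
Qed.

Lemma word_perm_in m s x : all (fun i => 0 < i < m) s -> 0 < x <= m ->
  0 < word_perm s x <= m.
Proof.
elim: s => [|i s IH] //= /andP[hi /IH {}IH] /IH hx.
by rewrite /swapn; case: ifP => [/eqP|_]; [|case: ifP => [/eqP|_]]; lia.
Qed.

Lemma word_perm_run t l : word_perm (rev (iota t l)) t = t + l.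
Proof.
elim: l t => [|l IH] t; first by rewrite addn0.
by rewrite /= rev_cons -cats1 word_perm_cat /= /swapn eqxx IH addnS.
Qed.

Lemma word_perm_run_lt t l x : x < t -> word_perm (rev (iota t l)) x = x.
Proof.
elim: l t => [|l IH] t hx //=.
by rewrite rev_cons -cats1 word_perm_cat /= /swapn !ifF ?IH //; lia.
Qed.

Lemma inversions_cat_run k v t l : all (fun i => 0 < i < k) v -> 1 <= t -> t + l = k.+1 ->
  inversions (word_perm (v ++ rev (iota t l))) k.+1 = inversions (word_perm v) k + l.
Proof.
move=> hv; elim: l t => [|l IHl] t ht htl.
  rewrite addn0 cats0 inversionsS /inversions_at big1_seq ?addn0 // => x.
  rewrite mem_index_iota => /andP[_ hx].
  rewrite (@word_perm_out k v k.+1) //.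
  by have := @word_perm_in k v x hv; lia.
rewrite /= rev_cons -cats1 catA.
rewrite (@eq_inversions _ (word_perm (v ++ rev (iota t.+1 l)) \o swapn t)); last first.
  by move=> x _ /=; rewrite word_perm_cat.
rewrite inversions_swapn; first by rewrite (IHl t.+1) ?addnS //; lia.
  lia.
rewrite !word_perm_cat (@word_perm_run_lt t.+1 l t) // word_perm_run.
have -> : t.+1 + l = k.+1 by lia.
rewrite (@word_perm_out k v k.+1) //.
by have := @word_perm_in k v t hv; lia.
Qed.

Definition down_run (m j : nat) : seq nat := rev (iota j (m.+1 - j)).

Lemma down_run_cat1 m j : j <= m -> down_run m j = down_run m j.+1 ++ [:: j].
Proof. by move=> h; rewrite /down_run subSS subSn // /= rev_cons cats1. Qed.

(* Coxeter's normal forms for S_m: products of one down run s_k ... s_j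
   (j <= k+1) for each k < m. *)
Inductive normal_word : nat -> seq nat -> Prop :=
| normal_word0 : normal_word 0 [::]
| normal_wordS m u j : normal_word m u -> 1 <= j <= m.+1 ->
    normal_word m.+1 (u ++ down_run m j).

Lemma normal_word_letters m u : normal_word m u -> all (fun i => 0 < i < m) u.
Proof.
elim=> //= k v j _ IH hj; rewrite all_cat; apply/andP; split.
  by apply: sub_all IH => x /andP[-> h] /=; apply: ltn_trans h _.
by apply/allP => x; rewrite /down_run mem_rev mem_iota; lia.
Qed.

Lemma normal_word_reduced m u : normal_word m u -> reduced_in m u.
Proof.
elim=> [|k v j hv IH hj]; first by rewrite /reduced_in /= /inversions big_geq.
rewrite /reduced_in normal_word_letters /=; last by constructor.
move: IH; rewrite /reduced_in => /andP[hlet /eqP hsz].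
rewrite size_cat hsz /down_run size_rev size_iota inversions_cat_run //; lia.
Qed.

Lemma normal_word_widen m u : normal_word m u -> normal_word m.+1 u.
Proof.
move=> h; have -> : u = u ++ down_run m m.+1 by rewrite /down_run subnn cats0.
by apply: normal_wordS; rewrite ?leqnn.
Qed.

Lemma normal_word_nil m : normal_word m [::].
Proof. by elim: m => [|m IH]; [constructor | apply: normal_word_widen]. Qed.

End NormalWords.

Section Span.
Variables (R : pzRingType) (V : lmodType R).

Inductive rspan (P : V -> Prop) : V -> Prop :=
| rspan0 : rspan P 0
| rspan_gen x : P x -> rspan P x
| rspanD x y : rspan P x -> rspan P y -> rspan P (x + y)
| rspanZ (a : R) x : rspan P x -> rspan P (a *: x).

Lemma rspanN (P : V -> Prop) x : rspan P x -> rspan P (- x).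
Proof. by move=> h; rewrite -scaleN1r; apply: rspanZ. Qed.

Lemma rspanB (P : V -> Prop) x y : rspan P x -> rspan P y -> rspan P (x - y).
Proof. by move=> hx hy; apply: rspanD => //; apply: rspanN. Qed.

Lemma rspan_sum (P : V -> Prop) (I : eqType) (s : seq I) (F : I -> V) :
  (forall i, i \in s -> rspan P (F i)) -> rspan P (\sum_(i <- s) F i).
Proof.
move=> H; rewrite big_seq; elim/big_ind: _ => //; first exact: rspan0.
exact: rspanD.
Qed.

Lemma rspan_sub (P P' : V -> Prop) x :
  (forall y, P y -> rspan P' y) -> rspan P x -> rspan P' x.
Proof.
by move=> H; elim=> [|y /H|y z _ hy _ hz|a y _ hy] //;
  [exact: rspan0 | exact: rspanD | exact: rspanZ].
Qed.

End Span.

Section SpanAlgebra.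
Variables (R : pzRingType) (A : algType R).
Implicit Types (P Q S : A -> Prop) (x y : A).

Lemma rspan_mulr P Q x y :
  (forall z, P z -> rspan Q (z * y)) -> rspan P x -> rspan Q (x * y).
Proof.
move=> H; elim=> [|z /H|z w _ hz _ hw|a z _ hz] //.
- by rewrite mul0r; apply: rspan0.
- by rewrite mulrDl; apply: rspanD.
- by rewrite -scalerAl; apply: rspanZ.
Qed.

Lemma rspan_mull P Q x y :
  (forall z, P z -> rspan Q (y * z)) -> rspan P x -> rspan Q (y * x).
Proof.
move=> H; elim=> [|z /H|z w _ hz _ hw|a z _ hz] //.
- by rewrite mulr0; apply: rspan0.
- by rewrite mulrDr; apply: rspanD.
- by rewrite -scalerAr; apply: rspanZ.
Qed.

Lemma rspan_mul P Q S x y :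
  (forall u v, P u -> Q v -> rspan S (u * v)) ->
  rspan P x -> rspan Q y -> rspan S (x * y).
Proof.
move=> H hx hy; apply: (rspan_mulr _ hx) => z hz.
by apply: (rspan_mull _ hy) => w hw; apply: H.
Qed.

End SpanAlgebra.

Lemma mulrCA_comm (R : pzRingType) (a b x : R) :
  a * b = b * a -> a * (b * x) = b * (a * x).
Proof. by rewrite !mulrA => ->. Qed.

(* The regrouping behind the inductive step of Twab_Lprod: p, s are the main term and
   the error sum, l = L_N, and g the correction of Twab_L. *)
Lemma mulr_regroup_step (R : pzRingType) (p s l g z : R) : p * l = l * p -> s * l = l * s ->
  (p + s) * (l * (1 + g) - z) = p * (l - z) - s * z + l * (p * g + s * (1 + g)).
Proof.
move=> pl sl; rewrite [l * (p * g + _)]mulrDr !mulrA -pl -sl mulrDl !mulrBr !mulrA.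
rewrite [p * l * _]mulrDr mulr1.
move: (p * l) (p * l * g) (p * z) (s * l * (1 + g)) (s * z) => a b c d e.
by rewrite (addrAC a) -!addrA (addrCA (- e)) (addrC (- e)).
Qed.

Section Hecke.
Variables (R : comUnitRingType) (A : algType R) (n : nat) (q : R) (T : nat -> A).
Hypothesis q_unit : q \is a GRing.unit.
Hypothesis T_quad : forall i, (1 <= i < n)%N -> (T i + q%:A) * (T i - 1) = 0.
Hypothesis T_braid : forall i, (1 <= i)%N -> (i.+1 < n)%N ->
  T i.+1 * T i * T i.+1 = T i * T i.+1 * T i.
Hypothesis T_comm : forall i j, (i.+1 < j)%N -> (j < n)%N -> T i * T j = T j * T i.
Hypothesis T0101 : (1 < n)%N -> T 0 * T 1 * T 0 * T 1 = T 1 * T 0 * T 1 * T 0.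

Notation TW := (Tword T).
Notation L := (Lm T q).

Lemma T_sq i : (1 <= i < n)%N -> T i * T i = (1 - q) *: T i + q%:A.
Proof.
move=> h; apply/eqP; rewrite -subr_eq0 -(T_quad h).
rewrite mulrDl !mulrBr !mulr1 mulr_algl scalerBl scale1r.
apply/eqP; rewrite opprD opprB !addrA; congr (_ + _); exact: addrAC.
Qed.

Lemma T_braidA i x : (1 <= i)%N -> (i.+1 < n)%N ->
  T i.+1 * (T i * (T i.+1 * x)) = T i * (T i.+1 * (T i * x)).
Proof. by move=> h1 h2; rewrite !mulrA T_braid. Qed.

Definition Tinv i := q^-1 *: T i + (1 - q^-1)%:A.

Lemma Tinv_T i : (1 <= i < n)%N -> Tinv i * T i = 1.
Proof.
move=> h; rewrite /Tinv mulrDl -scalerAl T_sq // mulr_algl scalerDr scalerA.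
rewrite addrAC -scalerDl mulrBr mulr1 mulVr // [q^-1 - 1 + _]addrC subrKA subrr.
by rewrite scale0r add0r scalerA mulVr // scale1r.
Qed.

Lemma Tword_nil : TW [::] = 1. Proof. exact: big_nil. Qed.
Lemma Tword_cons x s : TW (x :: s) = T x * TW s. Proof. exact: big_cons. Qed.
Lemma Tword_cat s t : TW (s ++ t) = TW s * TW t. Proof. exact: big_cat. Qed.
Lemma Tword_cat1 s x : TW (s ++ [:: x]) = TW s * T x.
Proof. by rewrite Tword_cat Tword_cons Tword_nil mulr1. Qed.

Lemma Tword_commT s i : (i < n)%N ->
  all (fun x => (x.+1 < i) || (i.+1 < x < n))%N s -> TW s * T i = T i * TW s.
Proof.
move=> hi; elim: s => [|x s IH] /=; first by rewrite Tword_nil mul1r mulr1.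
case/andP=> hx hs; rewrite Tword_cons -mulrA IH // !mulrA.
by case/orP: hx => [hx|/andP[hx hxn]]; [rewrite T_comm | rewrite [T i * T x]T_comm].
Qed.

Lemma Tword_rev_iota_T l j i : (1 <= j)%N -> (j < i < j + l)%N -> (j + l <= n)%N ->
  TW (rev (iota j l)) * T i = T i.-1 * TW (rev (iota j l)).
Proof.
elim: l i => [|l IH] i hj hi hn; first by lia.
rewrite iotaSr rev_cat /= Tword_cons.
have [lt_il|le_li] := ltnP i (j + l).
  by rewrite -mulrA IH ?mulrA -?(T_comm (i:=i.-1) (j:=(j+l)%N)) //; lia.
case: l IH hi hn le_li => [|l] IH hi hn le_li; first by lia.
have -> : i = (j + l).+1 by lia.
rewrite iotaSr rev_cat /= Tword_cons -!mulrA Tword_commT; last 2 first.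
- lia.
- by apply/allP => x; rewrite mem_rev mem_iota; lia.
by rewrite addnS !mulrA T_braid //; lia.
Qed.

Lemma Tword_iota_T l s x : (1 <= s <= x)%N -> (x.+1 < s + l)%N -> (s + l <= n)%N ->
  TW (iota s l) * T x = T x.+1 * TW (iota s l).
Proof.
elim: l x => [|l IH] x hx hxl hn; first by lia.
rewrite iotaSr Tword_cat1.
have [lt_xl|le_lx] := ltnP x.+1 (s + l).
  by rewrite -mulrA -T_comm ?mulrA ?IH //; lia.
case: l IH hxl hn le_lx => [|l] IH hxl hn le_lx; first by lia.
have ex : x = (s + l)%N by lia.
rewrite iotaSr Tword_cat1 addnS -ex -!mulrA [T x * (T x.+1 * T x)]mulrA -T_braid; [|lia|lia].
rewrite !mulrA Tword_commT //; first lia.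
by apply/allP => y; rewrite mem_iota; lia.
Qed.

Definition TSpan m := rspan (fun y => exists2 u, normal_word m u & y = TW u).

Lemma TSpan_mul_down_run m x j : (1 <= j <= m.+1)%N -> TSpan m x ->
  TSpan m.+1 (x * TW (down_run m j)).
Proof.
move=> hj; apply: rspan_mulr => _ [u hu ->]; apply: rspan_gen.
by exists (u ++ down_run m j); [apply: normal_wordS | rewrite Tword_cat].
Qed.

(* T_i commutes past the last run s_k ... s_j, is shifted down by it, lengthens it
   (i = j - 1), or meets its last letter (i = j), where the quadratic relation applies. *)
Lemma normal_word_mulT m u i : normal_word m u -> (m <= n)%N -> (1 <= i < m)%N ->
  TSpan m (TW u * T i).
Proof.
move=> hu; elim: hu i => [|k v j hv IH hj] i hn hi; first by lia.
rewrite Tword_cat.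
have [lt_ij|le_ji] := ltnP i.+1 j.
  rewrite -mulrA Tword_commT; first 1 last.
  - lia.
  - by apply/allP => x; rewrite /down_run mem_rev mem_iota; lia.
  by rewrite mulrA; apply: TSpan_mul_down_run => //; apply: IH; lia.
have [lt_ji|le_ij] := ltnP j i.
  rewrite -mulrA /down_run Tword_rev_iota_T; [|lia|lia|lia].
  by rewrite mulrA; apply: TSpan_mul_down_run => //; apply: IH; lia.
have nf_i : normal_word k.+1 (v ++ down_run k i) by apply: normal_wordS => //; lia.
have e_i : TW (v ++ down_run k i) = TW v * TW (down_run k i.+1) * T i.
  by rewrite (down_run_cat1 (_ : i <= k)%N) ?catA ?Tword_cat1 ?Tword_cat //; lia.
have [lt_ij|ge_ij] := ltnP i j.
  have -> : j = i.+1 by lia.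
  by apply: rspan_gen; exists (v ++ down_run k i); rewrite // e_i.
have -> : j = i by lia.
rewrite (down_run_cat1 (_ : i <= k)%N); last lia.
rewrite Tword_cat1 -!mulrA T_sq; last lia.
rewrite !mulrDr mulr_algr -!scalerAr !mulrA -e_i.
apply: rspanD; apply: rspanZ; apply: rspan_gen; first by exists (v ++ down_run k i).
by exists (v ++ down_run k i.+1); [apply: normal_wordS => //; lia | rewrite Tword_cat].
Qed.

Lemma TSpan1 m : TSpan m 1.
Proof. by apply: rspan_gen; exists [::]; [apply: normal_word_nil | rewrite Tword_nil]. Qed.

Lemma TSpan_mulT m x i : (m <= n)%N -> (1 <= i < m)%N -> TSpan m x -> TSpan m (x * T i).
Proof. by move=> hm hi; apply: rspan_mulr => _ [u hu ->]; apply: normal_word_mulT. Qed.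

Lemma TSpan_mulTword m x s : (m <= n)%N -> all (fun i => 0 < i < m)%N s ->
  TSpan m x -> TSpan m (x * TW s).
Proof.
move=> hm; elim: s x => [|i s IH] x /=; first by rewrite Tword_nil mulr1.
case/andP=> hi hs hx; rewrite Tword_cons mulrA; apply: IH => //; exact: TSpan_mulT.
Qed.

Lemma TSpan_Tword m s : (m <= n)%N -> all (fun i => 0 < i < m)%N s -> TSpan m (TW s).
Proof. by move=> hm hs; rewrite -[TW s]mul1r; apply: TSpan_mulTword => //; apply: TSpan1. Qed.

Lemma TSpan_mul m x y : (m <= n)%N -> TSpan m x -> TSpan m y -> TSpan m (x * y).
Proof.
move=> hm hx; apply: rspan_mull => _ [u hu ->].
by apply: TSpan_mulTword => //; apply: normal_word_letters.
Qed.

Lemma TSpan_T m i : (1 <= i < m)%N -> (m <= n)%N -> TSpan m (T i).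
Proof. by move=> hi hm; rewrite -[T i]mul1r; apply: TSpan_mulT => //; apply: TSpan1. Qed.

Lemma TSpan_Tinv m i : (1 <= i < m)%N -> (m <= n)%N -> TSpan m (Tinv i).
Proof. by move=> hi hm; apply: rspanD; apply: rspanZ; [apply: TSpan_T | apply: TSpan1]. Qed.

Lemma TSpan_widen m m' x : (m <= m')%N -> TSpan m x -> TSpan m' x.
Proof.
move=> /subnK <- hx; elim: (m' - m)%N => [//|k IH]; rewrite addSn.
apply: rspan_sub IH => _ [u hu ->]; apply: rspan_gen.
by exists u => //; apply: normal_word_widen.
Qed.

Definition Kword j := rev (iota 1 j.-1) ++ 0%N :: iota 1 j.-1.
Definition K j := TW (Kword j).

Lemma Lm_K j : L j = (q ^+ j.-1)^-1 *: K j.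
Proof. by rewrite /Lm /K /Kword Tword_cat Tword_cons /Tword mulrA /index_iota subn1. Qed.

Lemma K1 : K 1 = T 0.
Proof. by rewrite /K /Kword /= Tword_cons Tword_nil mulr1. Qed.

Lemma KS j : (1 <= j)%N -> K j.+1 = T j * K j * T j.
Proof.
case: j => [//|j] _; rewrite /K /Kword -[j.+2.-1]/(j.+1) -[j.+1.-1]/j.
rewrite iotaSr rev_cat /= Tword_cons -cat_cons catA Tword_cat1 add1n.
by rewrite !mulrA.
Qed.

Lemma K_commT_gt j i : (1 <= j)%N -> (j < i < n)%N -> K j * T i = T i * K j.
Proof.
move=> hj hi; apply: Tword_commT; first lia.
by apply/allP => x; rewrite /Kword mem_cat mem_rev inE mem_iota; lia.
Qed.

Lemma K_commT_lt j i : (1 <= i)%N -> (i.+1 < j <= n)%N -> K j * T i = T i * K j.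
Proof.
move=> hi; elim: j => [|j IH] hj; first by lia.
have [lt_ij|le_ji] := ltnP i.+1 j.
  rewrite KS; last lia.
  rewrite -!mulrA -(T_comm (i:=i) (j:=j)); [|lia|lia].
  rewrite (mulrCA_comm _ (IH _)); last lia.
  by rewrite (mulrCA_comm _ (esym (T_comm _ _))) //; lia.
have -> : j = i.+1 by lia.
rewrite KS // KS // -!mulrA [T i * (T i.+1 * T i)]mulrA -T_braid; [|lia|lia].
rewrite -mulrA (mulrCA_comm _ (K_commT_gt hi _)); last lia.
by rewrite T_braidA //; lia.
Qed.

Lemma K_T_shift i : (1 <= i < n)%N -> K i.+1 * (T i + (q - 1)%:A) = q *: (T i * K i).
Proof.
move=> hi; rewrite KS; last lia.
rewrite mulrDr -!mulrA T_sq // mulr_algr mulrDr -scalerAr mulr_algr.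
rewrite mulrDr -!scalerAr addrAC -scalerDl [1 - q + _]addrC subrKA subrr.
by rewrite scale0r add0r.
Qed.

(* K_1 K_2 = K_2 K_1 is the relation T_0 T_1 T_0 T_1 = T_1 T_0 T_1 T_0; the higher
   cases reduce to it by expanding K_{i+1} = T_i K_i T_i and braiding. *)
Lemma K_KS i : (1 <= i)%N -> (i < n)%N -> K i * K i.+1 = K i.+1 * K i.
Proof.
elim: i => [//|p IH] _ hn.
case: p IH hn => [|p] IH hn; first by rewrite (KS (j:=1)) // K1 !mulrA T0101.
have IHA X : K p.+1 * (T p.+1 * (K p.+1 * (T p.+1 * X))) =
             T p.+1 * (K p.+1 * (T p.+1 * (K p.+1 * X))).
  by rewrite !mulrA; congr (_ * X); have := IH isT (ltnW hn); rewrite (KS (j:=p.+1)) // !mulrA.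
have cTK X : T p.+2 * (K p.+1 * X) = K p.+1 * (T p.+2 * X).
  by apply: mulrCA_comm; rewrite K_commT_gt //; lia.
have bT X : T p.+2 * (T p.+1 * (T p.+2 * X)) = T p.+1 * (T p.+2 * (T p.+1 * X)).
  by apply: T_braidA; lia.
rewrite (KS (_ : 1 <= p.+2)%N) // (KS (_ : 1 <= p.+1)%N) // -!mulrA.
rewrite [in LHS]/= -[in LHS]bT -[in LHS]cTK [in LHS](cTK (T p.+1 * T p.+2)).
rewrite [T p.+2 * (T p.+1 * T p.+2)]mulrA T_braid; [|lia|lia].
rewrite -[T p.+1 * T p.+2 * T p.+1]mulrA [in LHS]IHA.
by rewrite -[in RHS]bT -[in RHS]cTK [in RHS]bT [in RHS](cTK (T p.+1)) !mulrA.
Qed.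

Lemma K_comm i j : (1 <= i)%N -> (i < j <= n)%N -> K i * K j = K j * K i.
Proof.
move=> hi; elim: j => [|j IH] hj; first by lia.
have [lt_ij|le_ji] := ltnP i j; last first.
  have -> : j = i by lia.
  by apply: K_KS; lia.
rewrite (KS (j:=j)) -?mulrA; last lia.
rewrite (mulrCA_comm _ (K_commT_gt hi _)); last lia.
rewrite (mulrCA_comm _ (IH _)); last lia.
by rewrite (K_commT_gt hi) ?mulrA //; lia.
Qed.

Lemma L_commT j i : (1 <= j <= n)%N -> (1 <= i < n)%N -> i != j -> i.+1 != j ->
  L j * T i = T i * L j.
Proof.
move=> hj hi h1 h2; rewrite Lm_K -scalerAl -scalerAr; congr (_ *: _).
by have [lt_ji|le_ij] := ltnP j i; [apply: K_commT_gt | apply: K_commT_lt]; lia.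
Qed.

Lemma L_commTword j s : (1 <= j <= n)%N ->
  all (fun x => (1 <= x < n)%N && (x != j) && (x.+1 != j)) s -> L j * TW s = TW s * L j.
Proof.
move=> hj; elim: s => [|x s IH] /=; first by rewrite Tword_nil mulr1 mul1r.
case/andP=> /andP[/andP[hx1 hx2] hx3] hs.
by rewrite Tword_cons mulrA L_commT // -mulrA IH // mulrA.
Qed.

Lemma L_T_shift i : (1 <= i < n)%N -> T i * L i = L i.+1 * (T i + (q - 1)%:A).
Proof.
move=> hi; rewrite !Lm_K -scalerAl K_T_shift // scalerA -scalerAr.
case: i hi => [//|i] hi /=; congr (_ *: _).
by rewrite exprS invrM ?unitrX // -mulrA mulVr // mulr1.
Qed.

Lemma L_comm i j : (1 <= i <= n)%N -> (1 <= j <= n)%N -> L i * L j = L j * L i.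
Proof.
move=> hi hj; rewrite !Lm_K -!scalerAl -!scalerAr !scalerA mulrC; congr (_ *: _).
have [lt_ij|lt_ji|->] := ltngtP i j; last by [].
  by apply: K_comm; lia.
by symmetry; apply: K_comm; lia.
Qed.

Definition Tinvword s := \prod_(i <- rev s) Tinv i.

Lemma Tinvword_Tword s : all (fun x => 1 <= x < n)%N s -> Tinvword s * TW s = 1.
Proof.
elim: s => [|x s IH] /=; first by rewrite Tword_nil /Tinvword big_nil mulr1.
case/andP=> hx hs; rewrite Tword_cons /Tinvword rev_cons -cats1 big_cat big_seq1 /=.
by rewrite -mulrA [X in _ * X]mulrA Tinv_T // mul1r IH.
Qed.

Lemma TSpan_Tinvword m s : (m <= n)%N -> all (fun x => 0 < x < m)%N s -> TSpan m (Tinvword s).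
Proof.
move=> hm; elim: s => [|x s IH] /=; first by rewrite /Tinvword big_nil => _; apply: TSpan1.
case/andP=> hx hs; rewrite /Tinvword rev_cons -cats1 big_cat big_seq1 /=.
by apply: TSpan_mul => //; [apply: IH | apply: TSpan_Tinv]; lia.
Qed.

Lemma Twab0 b : Twab T 0 b = 1.
Proof. by rewrite /Twab big_geq. Qed.

Lemma TwabS a b : Twab T a.+1 b = TW (iota a.+1 b) * Twab T a b.
Proof.
rewrite /Twab big_nat_recl // subn0 /Tij; congr (TW (iota _ _) * _); first lia.
by apply: eq_big_nat => t ht; congr (Tij T _ _); lia.
Qed.

Lemma Trun_conj_T a b j x : (1 <= j <= b)%N -> (a.+1 + b <= n)%N -> (1 <= x < a + j)%N ->
  exists2 z, TSpan (a + j).+1 z & TW (iota a.+1 b) * T x = z * TW (iota a.+1 b).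
Proof.
move=> hj hn hx.
have [lt_xa|le_ax] := ltnP x a.
  exists (T x); first by apply: TSpan_T; lia.
  by rewrite Tword_commT //; [lia | apply/allP => y; rewrite mem_iota; lia].
have [lt_ax|le_xa] := ltnP a x.
  by exists (T x.+1); [apply: TSpan_T | apply: Tword_iota_T]; lia.
have -> : x = a by lia.
case: b hj hn => [|b] hj hn; first by lia.
exists (T a.+1 * T a * Tinv a.+1).
  apply: TSpan_mul; first lia; last by apply: TSpan_Tinv; lia.
  by apply: TSpan_mul; first lia; apply: TSpan_T; lia.
rewrite /= Tword_cons -mulrA Tword_commT; first 1 last.
- lia.
- by apply/allP => y; rewrite mem_iota; lia.
by rewrite -!mulrA [Tinv _ * _]mulrA Tinv_T ?mul1r ?mulrA //; lia.
Qed.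

Lemma Trun_conj_TSpan a b j x : (1 <= j <= b)%N -> (a.+1 + b <= n)%N -> TSpan (a + j) x ->
  exists2 z, TSpan (a + j).+1 z & TW (iota a.+1 b) * x = z * TW (iota a.+1 b).
Proof.
move=> hj hn; elim=> {x} [|_ [u hu ->]|x y _ [x' hx' ex] _ [y' hy' ey]|c x _ [x' hx' ex]].
- by exists 0; [apply: rspan0 | rewrite mulr0 mul0r].
- move: (normal_word_letters hu); elim: u {hu} => [|x u IH] /=.
    by exists 1; [apply: TSpan1 | rewrite Tword_nil mul1r mulr1].
  case/andP=> hx /IH [z hz ez]; have [z' hz' ez'] := Trun_conj_T hj hn hx.
  exists (z' * z); first by apply: TSpan_mul => //; lia.
  by rewrite Tword_cons mulrA ez' -[LHS]mulrA ez mulrA.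
- by exists (x' + y'); [apply: rspanD | rewrite mulrDr ex ey mulrDl].
- by exists (c *: x'); [apply: rspanZ | rewrite -scalerAr ex scalerAl].
Qed.

(* Split T_{a+1} ... T_{a+b} = U T_{a+j} V: L_{a+j} commutes past V, is moved through
   T_{a+j} by L_T_shift, and L_{a+j+1} then commutes past U. *)
Lemma Trun_L_shift a b j : (1 <= j <= b)%N -> (a.+1 + b <= n)%N ->
  exists2 g, TSpan (a + j).+1 g &
    TW (iota a.+1 b) * L (a + j) = L (a + j).+1 * (1 + g) * TW (iota a.+1 b).
Proof.
move=> hj hn.
set U := TW (iota a.+1 j.-1); set V := TW (iota (a + j).+1 (b - j)).
have hU : all (fun x => 1 <= x < n)%N (iota a.+1 j.-1).
  by apply/allP => y; rewrite mem_iota; lia.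
have -> : TW (iota a.+1 b) = U * T (a + j) * V.
  rewrite /U /V -Tword_cat1 -Tword_cat -catA.
  have {1}-> : b = (j.-1 + (1 + (b - j)))%N by lia.
  by rewrite iotaD iotaD /=; congr (TW (_ ++ _ :: iota _ _)); lia.
set g := U * Tinv (a + j) * Tinvword (iota a.+1 j.-1).
have gP : g * (U * (T (a + j) * V)) = U * V.
  rewrite /g !mulrA -[_ * Tinvword _ * U]mulrA Tinvword_Tword // mulr1.
  by rewrite -[U * Tinv _ * _]mulrA Tinv_T ?mulr1 //; lia.
exists ((q - 1) *: g).
  apply: rspanZ; do 2?apply: TSpan_mul; try lia.
  - by apply: TSpan_Tword; [lia | apply/allP => y; rewrite mem_iota; lia].
  - by apply: TSpan_Tinv; lia.
  - by apply: TSpan_Tinvword; [lia | apply/allP => y; rewrite mem_iota; lia].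
rewrite -!mulrA -(L_commTword (j:=(a+j)%N) (s:=iota (a + j).+1 (b - j))); first last.
- by apply/allP => y; rewrite mem_iota; lia.
- lia.
rewrite [T _ * (L _ * _)]mulrA L_T_shift; last lia.
rewrite !mulrA -(L_commTword (j:=(a+j).+1) (s:=iota a.+1 j.-1)); first last.
- by apply/allP => y; rewrite mem_iota; lia.
- lia.
rewrite -/U -!mulrA; congr (_ * _).
rewrite -/V [RHS]mulrDl mul1r -scalerAl gP.
by rewrite mulrDl mulrDr mulr_algl -scalerAr.
Qed.

Lemma Twab_L a b j : (1 <= j <= b)%N -> (a + b <= n)%N ->
  exists2 g, TSpan (a + j) g & Twab T a b * L j = L (a + j) * (1 + g) * Twab T a b.
Proof.
elim: a => [|a IH] hj hn.
  by exists 0; [apply: rspan0 | rewrite Twab0 add0n addr0 !mulr1 mul1r].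
have [g hg eg] := IH hj (ltnW hn).
have [g1 hg1 eg1] := Trun_L_shift hj hn.
have [g2 hg2 eg2] := Trun_conj_TSpan hj hn hg.
exists (g1 + g2 + g1 * g2).
  rewrite addSn; apply: rspanD; first exact: rspanD.
  by apply: TSpan_mul => //; lia.
rewrite TwabS addSn -mulrA eg !mulrA eg1; congr (_ * _); rewrite -!mulrA; congr (_ * _).
rewrite mulrDr mulr1 eg2 -{1}[TW _]mul1r -mulrDl mulrA; congr (_ * _).
by rewrite mulrDr mulr1 mulrDl mul1r !addrA.
Qed.

Definition Lmono (e : nat -> nat) k := \prod_(0 <= i < k) L i.+1 ^+ e i.

Definition Lmono01 k x := exists2 e : nat -> nat, (forall i, e i <= 1)%N & x = Lmono e k.

(* Span of L_1^{e_1} ... L_{k-1}^{e_{k-1}} T_w with e_i <= 1 and w in S_k: these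
   elements lie in H_{k-1,k} as soon as r >= 2. *)
Definition LTSpan k := rspan (fun x => exists e u,
  [/\ (forall i, e i <= 1)%N, normal_word k u & x = Lmono e k.-1 * TW u]).

Lemma Lmono_set e k t :
  Lmono e k * L k.+1 ^+ t = Lmono (fun i => if i == k then t else e i) k.+1.
Proof.
rewrite /Lmono big_nat_recr //= eqxx; congr (_ * _).
by apply: eq_big_nat => i hi; rewrite ifF //; lia.
Qed.

Lemma Lmono_widen e k m : (k <= m)%N ->
  Lmono e k = Lmono (fun i => if (i < k)%N then e i else 0%N) m.
Proof.
move=> h; rewrite /Lmono (@big_cat_nat _ _ _ k 0 m _ _ (leq0n k) h) /=.
rewrite [X in _ = _ * X]big1_seq ?mulr1.
  by apply: eq_big_nat => i hi; rewrite ifT //; lia.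
by move=> i /andP[_]; rewrite mem_index_iota => hi; rewrite ifF ?expr0 //; lia.
Qed.

Lemma Lmono_commL e k j : (k <= n)%N -> (1 <= j <= n)%N -> L j * Lmono e k = Lmono e k * L j.
Proof.
move=> hk hj; rewrite /Lmono big_seq; apply: commr_prod => i; rewrite mem_index_iota => hi.
by apply: commrX; rewrite /GRing.comm L_comm //; lia.
Qed.

Lemma LTSpan_commL k m x : (1 <= k)%N -> (k < m <= n)%N -> LTSpan k x -> x * L m = L m * x.
Proof.
move=> hk hm; elim=> [|_ [e [u [he hu ->]]]|y z _ hy _ hz|c y _ hy].
- by rewrite mul0r mulr0.
- rewrite -mulrA -L_commTword ?mulrA -?Lmono_commL ?mulrA //; try lia.
  apply: sub_all (normal_word_letters hu) => y /andP[h1 h2].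
  by apply/andP; split; [apply/andP; split|]; lia.
- by rewrite mulrDl mulrDr hy hz.
- by rewrite -scalerAl hy scalerAr.
Qed.

Lemma LTSpan_mul k x y : (1 <= k <= n)%N -> rspan (Lmono01 k.-1) x -> TSpan k y ->
  LTSpan k (x * y).
Proof.
move=> hk hx hy; apply: (rspan_mul _ hx hy) => _ _ [e he ->] [u hu ->].
by apply: rspan_gen; exists e, u.
Qed.

Lemma LTSpan_L k m x y : (1 <= k)%N -> (k < m <= n)%N -> LTSpan k x -> TSpan m y ->
  LTSpan m (L k * x * y).
Proof.
move=> hk hm hx hy.
apply: (rspan_mulr (P := fun z => exists e u, [/\ (forall i, e i <= 1)%N,
  normal_word k u & z = L k * (Lmono e k.-1 * TW u)])); last first.
  by apply: rspan_mull hx => _ [e [u [he hu ->]]]; apply: rspan_gen; exists e, u.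
move=> _ [e [u [he hu ->]]].
have E := Lmono_set e k.-1 1; rewrite (prednK hk) expr1 in E.
rewrite !mulrA Lmono_commL ?E ?(@Lmono_widen _ k m.-1) -?mulrA; try lia.
apply: LTSpan_mul; first lia.
  by apply: rspan_gen; eexists; last reflexivity; move=> i /=; do 2?case: ifP.
apply: TSpan_mul (TSpan_widen (_ : k <= m)%N _) hy; try lia.
by apply: rspan_gen; exists u.
Qed.

Lemma rspan_Lprod s l Q : (1 <= s)%N -> (s + l <= n.+1)%N ->
  rspan (Lmono01 (s + l).-1) (\prod_(s <= k < s + l) (L k - Q%:A)).
Proof.
move=> hs; elim: l => [|l IH] hl.
  rewrite addn0 big_geq //; apply: rspan_gen; exists (fun _ => 0%N) => //.
  by rewrite /Lmono big1 // => i _; rewrite expr0.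
rewrite addnS big_nat_recr /=; last lia.
apply: (rspan_mulr _ (IH _)); last lia.
move=> _ [e he ->]; rewrite mulrBr mulr_algr.
have ek : (s + l)%N = (s + l).-1.+1 by lia.
rewrite {2 3}ek -[L _]expr1 Lmono_set -[Lmono e _]mulr1 -(expr0 (L (s + l).-1.+1)).
rewrite Lmono_set -ek; apply: rspanB; last apply: rspanZ;
  by apply: rspan_gen; eexists; last reflexivity; move=> i /=; case: ifP.
Qed.

Lemma Lprod_commL s t Q m : (1 <= s)%N -> (t <= n.+1)%N -> (1 <= m <= n)%N ->
  \prod_(s <= k < t) (L k - Q%:A) * L m = L m * \prod_(s <= k < t) (L k - Q%:A).
Proof.
move=> hs ht hm; symmetry; rewrite big_seq; apply: commr_prod => k.
rewrite mem_index_iota => hk; rewrite /GRing.comm mulrBl mulrBr mulr_algl mulr_algr.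
by rewrite L_comm //; lia.
Qed.

Lemma Twab_Lprod a b c Q l : (1 <= c)%N -> (a + b <= n)%N -> (c + l <= b.+1)%N ->
  exists h : nat -> A, (forall k, (a + c <= k < a + c + l)%N -> LTSpan k (h k)) /\
   Twab T a b * \prod_(c <= k < c + l) (L k - Q%:A) =
   (\prod_(a + c <= k < a + c + l) (L k - Q%:A) + \sum_(a + c <= k < a + c + l) L k * h k)
     * Twab T a b.
Proof.
move=> hc hab; elim: l => [|l IH] hl.
  exists (fun _ => 0); split => [k|]; first lia.
  by rewrite !addn0 !big_geq // addr0 mulr1 mul1r.
have /IH [h [hh eh]] : (c + l <= b.+1)%N by lia.
have hcl : (1 <= c + l <= b)%N by lia.
have [g hg eg] := Twab_L hcl hab.
set N := (a + c + l)%N; rewrite addnA -/N in hg eg.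
have eN : N = (a + c + l)%N by [].
set P := \prod_(a + c <= k < N) (L k - Q%:A).
set S := \sum_(a + c <= k < N) L k * h k.
have PL : P * L N = L N * P by apply: Lprod_commL; lia.
have SL : S * L N = L N * S.
  symmetry; rewrite /S big_seq; apply: commr_sum => k; rewrite mem_index_iota => hk.
  rewrite /GRing.comm -mulrA (LTSpan_commL (k:=k)); [|lia|lia|by apply: hh; lia].
  by rewrite !mulrA [L N * L k]L_comm //; lia.
exists (fun k => if k == N then P * g + S * (1 + g) else (- Q) *: h k); split.
  move=> k hk; case: eqP => [->|neq]; last by apply: rspanZ; apply: hh; lia.
  apply: rspanD; first by apply: LTSpan_mul; [lia | apply: rspan_Lprod; lia | done].
  rewrite /S mulr_suml; apply: rspan_sum => k'; rewrite mem_index_iota => hk'.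
  by apply: LTSpan_L; [lia | lia | apply: hh; lia | apply: rspanD (TSpan1 _) hg].
rewrite !addnS -/N !big_nat_recr /= ?eqxx -/P; [|lia|lia|lia].
rewrite [\sum_(a + c <= k < N) _](eq_big_nat _ _ (F2 := fun k => - (L k * h k * Q%:A)));
  last first.
  by move=> k hk; rewrite ifF; [rewrite -scalerAr mulr_algr scaleNr | apply/eqP; lia].
rewrite sumrN -mulr_suml -/S mulrA eh -/N -/P -/S -mulrA mulrBr eg mulr_algr.
by rewrite -[Q *: _]mulr_algl -mulrBl mulrA mulr_regroup_step // addrA.
Qed.

Lemma inH_rspan r k (P : A -> Prop) x : (forall y, P y -> inH T q r k.-1 k y) ->
  rspan P x -> inH T q r k.-1 k x.
Proof.
move=> H; elim=> [|y /H //|y z _ [s1 [h1 e1]] _ [s2 [h2 e2]]|c y _ [s1 [h1 e1]]].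
- by exists [::]; split => //; rewrite big_nil.
- exists (s1 ++ s2); split; first by rewrite all_cat h1 h2.
  by rewrite big_cat e1 e2.
- exists [seq (p.1, c * p.2) | p <- s1]; split; first by rewrite all_map.
  by rewrite e1 scaler_sumr big_map; apply: eq_bigr => p _; rewrite scalerA.
Qed.

Lemma LTSpan_inH r k x : (1 < r)%N -> LTSpan k x -> inH T q r k.-1 k x.
Proof.
move=> hr; apply: inH_rspan => _ [e [u [he hu ->]]].
exists [:: ([ffun i : 'I_k.-1 => Ordinal (leq_ltn_trans (he i) hr)], u, 1)].
split; first by rewrite /= normal_word_reduced.
rewrite big_seq1 scale1r /=; congr (_ * _).
by rewrite /Lmon /Lmono big_mkord; apply: eq_bigr => i _; rewrite ffunE.
Qed.

Lemma TSpan_inH r k x : (0 < r)%N -> TSpan k x -> inH T q r k.-1 k x.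
Proof.
move=> hr; apply: inH_rspan => _ [u hu ->].
exists [:: ([ffun i : 'I_k.-1 => Ordinal hr], u, 1)].
split; first by rewrite /= normal_word_reduced.
by rewrite big_seq1 scale1r /= /Lmon big1 ?mul1r // => i _; rewrite ffunE expr0.
Qed.

Section ScalarT0.
Variable Q1 : R.
Hypothesis T0_scalar : T 0 = Q1%:A.

Lemma TSpan_L j : (1 <= j <= n)%N -> TSpan j (L j).
Proof.
move=> hj; rewrite Lm_K /K /Kword Tword_cat Tword_cons T0_scalar mulr_algl -scalerAr.
apply/rspanZ/rspanZ/TSpan_mul; first lia.
  by apply: TSpan_Tword; [lia | apply/allP => y; rewrite mem_rev mem_iota; lia].
by apply: TSpan_Tword; [lia | apply/allP => y; rewrite mem_iota; lia].
Qed.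

Lemma TSpan_Lmono e k m : (k < m <= n)%N -> TSpan m (Lmono e k).
Proof.
elim: k => [|k IH] hk; first by rewrite /Lmono big_geq //; apply: TSpan1.
rewrite /Lmono big_nat_recr //=; apply: TSpan_mul; [lia | apply: IH; lia |].
elim: (e k) => [|t IHt]; first by rewrite expr0; apply: TSpan1.
rewrite exprS; apply: TSpan_mul => //; first lia.
by apply: (TSpan_widen (_ : k.+1 <= m)%N); [lia | apply: TSpan_L; lia].
Qed.

Lemma LTSpan_TSpan k x : (1 <= k <= n)%N -> LTSpan k x -> TSpan k x.
Proof.
move=> hk; apply: rspan_sub => _ [e [u [he hu ->]]].
by apply: TSpan_mul; [lia | apply: TSpan_Lmono; lia | apply: rspan_gen; exists u].
Qed.

End ScalarT0.

End Hecke.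

Theorem lemma5p10 (R : idomainType) (A : algType R) (n r : nat) (q : R)
    (Qs : 'I_r -> R) (T : nat -> A) :
  q \is a GRing.unit -> (1 <= n)%N -> (1 <= r)%N ->
  AK_relations n q Qs T ->
  forall (Q : R) (a b c d : nat),
    (a + b <= n)%N -> (1 <= c)%N -> (c <= d)%N -> (d <= b)%N ->
    exists h : nat -> A,
      (forall k, (a + c <= k <= a + d)%N -> inH T q r k.-1 k (h k)) /\
      Twab T a b * Lij T q Q c d =
        (Lij T q Q (a + c) (a + d)
           + \sum_(a + c <= k < (a + d).+1) Lm T q k * h k) * Twab T a b.
Proof.
move=> qU _ hr [T0_ann T0101 T_quad T_braid T_comm] Q a b c d hab hc hcd hdb.
have hl : (c + (d.+1 - c) <= b.+1)%N by lia.
have [h [hh eh]] := Twab_Lprod qU T_quad T_braid T_comm T0101 Q hc hab hl.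
have e1 : (c + (d.+1 - c) = d.+1)%N by lia.
have e2 : (a + c + (d.+1 - c) = (a + d).+1)%N by lia.
rewrite e1 e2 in hh eh; exists h; split => // k hk.
have {}hh : LTSpan q T k (h k) by apply: hh; lia.
have [lt1r|le_r1] := ltnP 1 r; first exact: LTSpan_inH.
(* For r = 1 the generator T_0 is the scalar Q_1, so no powers of L are needed *)
have r1 : r = 1%N by lia.
subst r; have T0_scalar : T 0%N = (Qs ord0)%:A.
  by apply/eqP; rewrite -subr_eq0 -T0_ann big_ord1.
apply: TSpan_inH => //; apply: (LTSpan_TSpan qU T_quad T_braid T_comm T0101 T0_scalar) => //.
lia.
Qed.
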